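(* Let $u,v>0$ and consider the map $(x,y)\mapsto\big(uy(1-y),\ vx(1-x)\big)$ (Kopel's map with $a=b=1$). Define $R_1=u^2v^2-4u^2v-4uv^2+18uv-27$, $S_3=u^3v^3-4u^3v^2-4u^2v^3+15u^2v^2+12u^2v+12uv^2-85uv+125$, $A_1=uv-15$, $A_2=u^2v^2-4u^2v-5uv^2+21uv+11v-60$. If $R_1>0$, $S_3>0$, $A_1<0$ and $A_2>0$, then two locally stable positive equilibria exist. Furthermore, exactly one locally stable positive equilibrium exists if either ($uv>1$, $R_1<0$, $S_3>0$) or ($uv>1$, $R_1>0$, $S_3<0$).
   Context: An equilibrium is a real fixed point $(x^*,y^* )$; it is positive if $x^*,y^*>0$. An equilibrium is called (locally) stable if both eigenvalues of the Jacobian matrix of the map at it have modulus less than $1$; for a general Kopel map $(x,y)\mapsto((1-a)x+auy(1-y),(1-b)y+bvx(1-x))$ the Jacobian at $(x^*,y^* )$ is $\begin{pmatrix}1-a & ua(1-2y^* )\\ vb(1-2x^* ) & 1-b\end{pmatrix}$, and stability is equivalent to the Jury conditions $1-\mathrm{Tr}(J)+\mathrm{Det}(J)>0$, $1+\mathrm{Tr}(J)+\mathrm{Det}(J)>0$, $1-\mathrm{Det}(J)>0$. *)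

From Stdlib Require Import Reals.
From Coquelicot Require Import Coquelicot.
Open Scope R_scope.

Definition kopel (a b u v : R) (p : R * R) : R * R :=
  ((1 - a) * fst p + a * u * snd p * (1 - snd p),
   (1 - b) * snd p + b * v * fst p * (1 - fst p)).

Definition J11 (a b u v x y : R) : R := 1 - a.
Definition J12 (a b u v x y : R) : R := u * a * (1 - 2 * y).
Definition J21 (a b u v x y : R) : R := v * b * (1 - 2 * x).
Definition J22 (a b u v x y : R) : R := 1 - b.

Definition is_equilibrium (a b u v x y : R) : Prop := kopel a b u v (x, y) = (x, y).

Definition is_positive (x y : R) : Prop := 0 < x /\ 0 < y.

Definition is_eigenvalue (a b u v x y : R) (lam : C) : Prop :=
  ((RtoC (J11 a b u v x y) - lam) * (RtoC (J22 a b u v x y) - lam)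
    - RtoC (J12 a b u v x y) * RtoC (J21 a b u v x y))%C = 0%C.

Definition locally_stable (a b u v x y : R) : Prop :=
  forall lam : C, is_eigenvalue a b u v x y lam -> Cmod lam < 1.

Definition stable_pos_eq (u v x y : R) : Prop :=
  is_equilibrium 1 1 u v x y /\ is_positive x y /\ locally_stable 1 1 u v x y.

Definition kR1 (u v : R) : R :=
  u^2*v^2 - 4*u^2*v - 4*u*v^2 + 18*u*v - 27.
Definition kS3 (u v : R) : R :=
  u^3*v^3 - 4*u^3*v^2 - 4*u^2*v^3 + 15*u^2*v^2 + 12*u^2*v + 12*u*v^2 - 85*u*v + 125.
Definition kA1 (u v : R) : R := u*v - 15.
Definition kA2 (u v : R) : R :=
  u^2*v^2 - 4*u^2*v - 5*u*v^2 + 21*u*v + 11*v - 60.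

From Stdlib Require Import Reals Lra Psatz Nsatz.
From Coquelicot Require Import Coquelicot.
Open Scope R_scope.

(* Substituting y = v x (1 - x), the positive equilibria are the roots x of the cubic
   g(x) = u v (1 - x) (1 - v x (1 - x)) - 1, all of which lie in (0, 1) when u v > 1.
   The Jacobian is anti-diagonal, so its eigenvalues satisfy lam^2 = 1 + x g'(x) at such a
   root: the equilibrium is stable iff g'(x) < 0 and m(x) := 2 + x g'(x) > 0.
   Up to a positive factor R1 is the discriminant of g and S3 the resultant of g and m.
   If R1 < 0, g has a single real root r, where g' < 0, and m(r) has the sign of S3 because
   the product of m over the two complex roots is a norm.  If R1 > 0, g has roots a < b < c;
   g'(b) > 0 (so m(b) > 0) while g'(a), g'(c) < 0, and by Vieta the elementary symmetric
   functions of m(a), m(b), m(c) are -A1, -K and S3.  So S3 < 0 leaves exactly one stable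
   root, and under A1 < 0, A2 > 0, S3 > 0 a discriminant argument in v at fixed u v gives
   K < 0, making all three margins positive. *)

Lemma complete_square (A B C x : R) :
  4 * A * (A * x ^ 2 + B * x + C) = (2 * A * x + B) ^ 2 - (B ^ 2 - 4 * A * C).
Proof. ring. Qed.

Lemma quadratic_discr_pos (A B C x : R) :
  0 < A -> A * x ^ 2 + B * x + C < 0 -> 0 < B ^ 2 - 4 * A * C.
Proof.
  intros HA Hq. pose proof (complete_square A B C x). pose proof (pow2_ge_0 (2 * A * x + B)).
  nra.
Qed.

Lemma quadratic_discr_nonneg (A B C x : R) :
  0 < A -> A * x ^ 2 + B * x + C <= 0 -> 0 <= B ^ 2 - 4 * A * C.
Proof.
  intros HA Hq. pose proof (complete_square A B C x). pose proof (pow2_ge_0 (2 * A * x + B)).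
  nra.
Qed.

Lemma quadratic_form_nonpos (A B C s t : R) :
  A < 0 -> B ^ 2 - 4 * A * C < 0 -> A * s ^ 2 + B * s * t + C * t ^ 2 <= 0.
Proof.
  intros HA HD.
  assert (E : 4 * A * (A * s ^ 2 + B * s * t + C * t ^ 2)
              = (2 * A * s + B * t) ^ 2 - (B ^ 2 - 4 * A * C) * t ^ 2) by ring.
  pose proof (pow2_ge_0 (2 * A * s + B * t)). pose proof (pow2_ge_0 t). nra.
Qed.

Lemma quadratic_neg (A B C x : R) :
  A < 0 -> B ^ 2 - 4 * A * C < 0 -> A * x ^ 2 + B * x + C < 0.
Proof.
  intros HA HD. apply Rnot_le_lt. intro Hq.
  assert (0 <= (- B) ^ 2 - 4 * (- A) * (- C)).
  { apply (quadratic_discr_nonneg _ _ _ x); lra. }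
  lra.
Qed.

Lemma quadratic_factor (A B C : R) :
  A <> 0 -> 0 < B ^ 2 - 4 * A * C ->
  exists s1 s2, s1 <> s2 /\ forall x, A * x ^ 2 + B * x + C = A * (x - s1) * (x - s2).
Proof.
  intros HA HD. set (d := sqrt (B ^ 2 - 4 * A * C)).
  assert (Hd : d ^ 2 = B ^ 2 - 4 * A * C) by (apply pow2_sqrt; lra).
  assert (Hd0 : 0 < d) by (apply sqrt_lt_R0; lra).
  exists ((- B + d) / (2 * A)), ((- B - d) / (2 * A)). split.
  - intro E. apply (Rmult_eq_compat_r (2 * A)) in E.
    field_simplify in E; [lra | auto | auto].
  - intro x. field_simplify; [rewrite Hd; field |]; auto.
Qed.

Lemma Cmod_sqrt_lt_1_iff (p : R) :
  (forall z : C, (z * z)%C = RtoC p -> Cmod z < 1) <-> Rabs p < 1.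
Proof.
  assert (Hsq : forall z : C, (z * z)%C = RtoC p -> Cmod z * Cmod z = Rabs p).
  { intros z Hz. rewrite <- Cmod_mult, Hz. apply Cmod_R. }
  split.
  - intros H.
    assert (Hroot : exists z : C, (z * z)%C = RtoC p).
    { destruct (Rle_or_lt 0 p) as [Hp | Hp].
      - exists (RtoC (sqrt p)). rewrite <- RtoC_mult, sqrt_sqrt; [reflexivity | lra].
      - exists (0, sqrt (- p)). unfold Cmult, RtoC; cbn [fst snd].
        f_equal; [rewrite sqrt_sqrt |]; lra. }
    destruct Hroot as [z Hz].
    pose proof (H z Hz). pose proof (Hsq z Hz). pose proof (Cmod_ge_0 z). nra.
  - intros Hp z Hz. pose proof (Hsq z Hz). pose proof (Cmod_ge_0 z). nra.
Qed.

Lemma locally_stable_11_iff (u v x y : R) :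
  locally_stable 1 1 u v x y <-> Rabs (u * (1 - 2 * y) * (v * (1 - 2 * x))) < 1.
Proof.
  rewrite <- Cmod_sqrt_lt_1_iff. unfold locally_stable.
  assert (Heig : forall lam, is_eigenvalue 1 1 u v x y lam <->
            (lam * lam)%C = RtoC (u * (1 - 2 * y) * (v * (1 - 2 * x)))).
  { intros [l1 l2]. unfold is_eigenvalue, J11, J12, J21, J22, Cmult, Cminus, Cplus, Copp, RtoC.
    cbn [fst snd]. split; intro H; injection H; intros; f_equal; nra. }
  split; intros H lam Hlam; apply H, Heig, Hlam.
Qed.

Lemma is_equilibrium_11_iff (u v x y : R) :
  is_equilibrium 1 1 u v x y <-> x = u * y * (1 - y) /\ y = v * x * (1 - x).
Proof.
  unfold is_equilibrium, kopel; cbn [fst snd].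
  split; [intro H; injection H | intros [Hx Hy]; f_equal]; lra.
Qed.

Definition eq_cubic (u v x : R) : R := u * v * (1 - x) * (1 - v * x * (1 - x)) - 1.
Definition eq_cubic' (u v x : R) : R :=
  -3 * u * v ^ 2 * x ^ 2 + 4 * u * v ^ 2 * x - u * v * (v + 1).
Definition margin (u v x : R) : R :=
  -2 * u * v ^ 2 * x ^ 2 + 2 * u * v * (v + 1) * x + 5 - 3 * u * v.

Definition cof_b (u v r : R) : R := u * v ^ 2 * (2 - r).
Definition cof_c (u v r : R) : R := - u * v * (v * (1 - r) ^ 2 + 1).
Definition cofactor (u v r x : R) : R := - u * v ^ 2 * x ^ 2 + cof_b u v r * x + cof_c u v r.
Definition cof_discr (u v r : R) : R := cof_b u v r ^ 2 - 4 * (- u * v ^ 2) * cof_c u v r.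

(* Since [margin u v x = 2 * cofactor u v r x + l1 * x + l0], this is
   [l1 ^ 2 * cofactor u v r (- l0 / l1)], the resultant of [cofactor u v r] and [margin u v]:
   [- u * v ^ 2] times the product of the margins at the two other roots of the cubic. *)
Definition cof_resultant (u v r : R) : R :=
  let l1 := 2 * u * v * (v * (r - 1) + 1) in
  let l0 := 5 - 3 * u * v - 2 * cof_c u v r in
  - u * v ^ 2 * l0 ^ 2 + cof_b u v r * l0 * (- l1) + cof_c u v r * (- l1) ^ 2.

Definition cubic_roots (u v a b c : R) : Prop :=
  forall x, eq_cubic u v x = - u * v ^ 2 * (x - a) * (x - b) * (x - c).

Definition kK (u v : R) : R := u ^ 2 * v ^ 2 - 4 * u ^ 2 * v - 4 * u * v ^ 2 + 22 * u * v - 75.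

Definition two_stable_pos_eqs (u v : R) : Prop :=
  exists x1 y1 x2 y2 : R,
    (x1, y1) <> (x2, y2) /\
    stable_pos_eq u v x1 y1 /\ stable_pos_eq u v x2 y2 /\
    (forall x y : R, stable_pos_eq u v x y -> (x, y) = (x1, y1) \/ (x, y) = (x2, y2)).

Definition unique_stable_pos_eq (u v : R) : Prop :=
  exists x0 y0 : R,
    stable_pos_eq u v x0 y0 /\ (forall x y : R, stable_pos_eq u v x y -> (x, y) = (x0, y0)).

(* Adjoining the variable [w = / k] lets [nsatz] divide by [k], here the leading coefficient
   of the cubic. *)
Ltac nsatz_dividing_by k Hk :=
  let w := fresh "w" in let Hw := fresh "Hw" in
  pose proof (Rinv_l k Hk) as Hw; revert Hw; generalize (/ k); intros w Hw;
  cbn [pow] in *; nsatz.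

Section KopelCubic.

Variables u v : R.
Hypothesis hu : 0 < u.
Hypothesis hv : 0 < v.

Let uv2_pos : 0 < u * v ^ 2.
Proof. pose proof (pow_lt v 2 hv). nra. Qed.

Lemma stability_product_eq (x : R) :
  u * (1 - 2 * (v * x * (1 - x))) * (v * (1 - 2 * x)) = 1 + eq_cubic u v x + x * eq_cubic' u v x.
Proof. unfold eq_cubic, eq_cubic'. ring. Qed.

Lemma margin_eq (x : R) : margin u v x = 2 + x * eq_cubic' u v x - 3 * eq_cubic u v x.
Proof. unfold margin, eq_cubic, eq_cubic'. ring. Qed.

Hypothesis huv : 1 < u * v.

Lemma eq_cubic_root_bounds (x : R) : eq_cubic u v x = 0 -> 0 < x < 1.
Proof.
  unfold eq_cubic. intro Hg.
  assert (H0 : 0 < x).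
  { apply Rnot_le_lt. intro Hx.
    assert (0 <= v * (- x) * (1 - x)) by (apply Rmult_le_pos; [apply Rmult_le_pos |]; lra).
    assert (u * v * 1 * 1 <= u * v * (1 - x) * (1 - v * x * (1 - x))).
    { apply Rmult_le_compat; try lra. apply Rmult_le_compat_l; lra. }
    lra. }
  split; [exact H0 |]. apply Rnot_le_lt. intro Hx.
  assert (0 <= v * x * (x - 1)) by (apply Rmult_le_pos; [apply Rmult_le_pos |]; lra).
  assert (0 <= u * v * (x - 1) * (1 - v * x * (1 - x))).
  { apply Rmult_le_pos; [apply Rmult_le_pos |]; nra. }
  nra.
Qed.

Lemma stable_pos_eq_iff (x y : R) :
  stable_pos_eq u v x y <->
  y = v * x * (1 - x) /\ eq_cubic u v x = 0 /\ eq_cubic' u v x < 0 /\ 0 < margin u v x.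
Proof.
  unfold stable_pos_eq, is_positive. rewrite is_equilibrium_11_iff, locally_stable_11_iff.
  split.
  - intros [[Hx Hy] [[Hx0 Hy0] Hst]].
    assert (Hg : eq_cubic u v x = 0).
    { assert (Hxg : x * eq_cubic u v x = 0) by (unfold eq_cubic; rewrite <- Hy; nra).
      apply Rmult_integral in Hxg as [Hxg | Hxg]; lra. }
    rewrite Hy, stability_product_eq, Hg in Hst.
    apply Rabs_def2 in Hst as [Hlt Hgt].
    refine (conj Hy (conj Hg _)). rewrite margin_eq, Hg. split; nra.
  - intros (Hy & Hg & Hd & Hm).
    pose proof (eq_cubic_root_bounds x Hg) as Hx.
    rewrite margin_eq, Hg in Hm. subst y.
    repeat split.
    + unfold eq_cubic in Hg. nra.
    + lra.
    + pose proof (Rmult_lt_0_compat x (1 - x)). nra.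
    + rewrite stability_product_eq, Hg. apply Rabs_def1; nra.
Qed.

Lemma eq_cubic_has_root : exists r, eq_cubic u v r = 0.
Proof.
  assert (Hc : continuity (fun x => - eq_cubic u v x)) by (unfold eq_cubic; reg).
  destruct (IVT _ 0 1 Hc) as [r [_ Hr]]; unfold eq_cubic in *; [lra | lra | lra |].
  exists r. lra.
Qed.

Lemma eq_cubic_sub (r x : R) : eq_cubic u v x - eq_cubic u v r = (x - r) * cofactor u v r x.
Proof. unfold eq_cubic, cofactor, cof_b, cof_c. ring. Qed.

Lemma cofactor_diag (r : R) : cofactor u v r r = eq_cubic' u v r.
Proof. unfold cofactor, eq_cubic', cof_b, cof_c. ring. Qed.

Lemma cof_discr_at_root (r : R) :
  eq_cubic u v r = 0 -> eq_cubic' u v r ^ 2 * cof_discr u v r = u ^ 2 * v ^ 4 * kR1 u v.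
Proof.
  unfold eq_cubic, eq_cubic', cof_discr, cof_b, cof_c, kR1. intros.
  nsatz_dividing_by (u * v ^ 2) (Rgt_not_eq _ _ uv2_pos).
Qed.

Lemma cof_resultant_at_root (r : R) :
  eq_cubic u v r = 0 -> margin u v r * cof_resultant u v r = - u * v ^ 2 * kS3 u v.
Proof.
  unfold eq_cubic, margin, cof_resultant, cof_b, cof_c, kS3. intros.
  nsatz_dividing_by (u * v ^ 2) (Rgt_not_eq _ _ uv2_pos).
Qed.

Lemma unique_stable_of_neg_discr : kR1 u v < 0 -> kS3 u v > 0 -> unique_stable_pos_eq u v.
Proof.
  intros HR HS. destruct eq_cubic_has_root as [r Hr].
  assert (HD : cof_discr u v r < 0).
  { apply Rnot_le_lt. intro HD.
    assert (Hprod : 0 <= eq_cubic' u v r ^ 2 * cof_discr u v r)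
      by (apply Rmult_le_pos; [apply pow2_ge_0 | lra]).
    assert (0 < u ^ 2 * v ^ 4) by (apply Rmult_lt_0_compat; apply pow_lt; lra).
    rewrite cof_discr_at_root in Hprod by exact Hr. nra. }
  assert (Hneg : forall x, cofactor u v r x < 0).
  { intro x. apply quadratic_neg; [lra | exact HD]. }
  assert (Hres : cof_resultant u v r <= 0) by (apply quadratic_form_nonpos; [lra | exact HD]).
  assert (Hm : 0 < margin u v r) by (pose proof (cof_resultant_at_root r Hr); nra).
  exists r, (v * r * (1 - r)). split.
  - apply stable_pos_eq_iff. rewrite <- cofactor_diag. auto.
  - intros x y (Hy & Hx & _)%stable_pos_eq_iff.
    assert (x = r) as ->.
    { pose proof (eq_cubic_sub r x) as E. rewrite Hx, Hr, Rminus_0_r in E.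
      pose proof (Hneg x). symmetry in E. apply Rmult_integral in E as [E | E]; lra. }
    now subst y.
Qed.

Lemma cubic_roots_sort (a b c : R) :
  a <> b -> b <> c -> a <> c -> cubic_roots u v a b c ->
  exists a' b' c', a' < b' < c' /\ cubic_roots u v a' b' c'.
Proof.
  intros Hab Hbc Hac Hr.
  destruct (Rlt_or_le a b), (Rlt_or_le b c), (Rlt_or_le a c).
  all: first [ lra
             | exists a, b, c; split; [lra |] | exists a, c, b; split; [lra |]
             | exists b, a, c; split; [lra |] | exists b, c, a; split; [lra |]
             | exists c, a, b; split; [lra |] | exists c, b, a; split; [lra |] ].
  all: intro x; rewrite Hr; ring.
Qed.

Lemma cubic_roots_of_pos_discr :
  kR1 u v > 0 -> exists a b c, a < b < c /\ cubic_roots u v a b c.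
Proof.
  intros HR. destruct eq_cubic_has_root as [r Hr].
  pose proof (cof_discr_at_root r Hr) as Hdisc.
  assert (0 < u ^ 2 * v ^ 4 * kR1 u v)
    by (apply Rmult_lt_0_compat; [apply Rmult_lt_0_compat; apply pow_lt |]; lra).
  assert (HD : 0 < cof_discr u v r) by (pose proof (pow2_ge_0 (eq_cubic' u v r)); nra).
  assert (Hd : cofactor u v r r <> 0).
  { rewrite cofactor_diag. intro E. rewrite E in Hdisc. lra. }
  destruct (quadratic_factor (- u * v ^ 2) (cof_b u v r) (cof_c u v r)) as (s1 & s2 & Hs & Hq);
    [lra | exact HD |].
  assert (Hroots : cubic_roots u v r s1 s2).
  { intro x. pose proof (eq_cubic_sub r x) as E. rewrite Hr in E. unfold cofactor in E.
    rewrite Hq in E. lra. }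
  apply (cubic_roots_sort r s1 s2); auto.
  - intros ->. apply Hd. unfold cofactor. rewrite Hq. ring.
  - intros ->. apply Hd. unfold cofactor. rewrite Hq. ring.
Qed.

Section ThreeRoots.

Variables a b c : R.
Hypothesis hroots : cubic_roots u v a b c.

Lemma cubic_roots_vieta :
  a + b + c = 2 /\ u * v ^ 2 * (a * b + b * c + c * a) = u * v ^ 2 + u * v /\
  u * v ^ 2 * (a * b * c) = u * v - 1.
Proof.
  pose proof (hroots 0). pose proof (hroots 1). pose proof (hroots (-1)).
  unfold eq_cubic in *. repeat split; nsatz_dividing_by (u * v ^ 2) (Rgt_not_eq _ _ uv2_pos).
Qed.

Lemma eq_cubic'_at_roots :
  eq_cubic' u v a = - u * v ^ 2 * (a - b) * (a - c) /\
  eq_cubic' u v b = - u * v ^ 2 * (b - a) * (b - c) /\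
  eq_cubic' u v c = - u * v ^ 2 * (c - a) * (c - b).
Proof.
  destruct cubic_roots_vieta as (H1 & H2 & H3).
  unfold eq_cubic'. cbn [pow] in *. repeat split; nsatz.
Qed.

Lemma margin_esym :
  margin u v a + margin u v b + margin u v c = 15 - u * v /\
  margin u v a * margin u v b + margin u v b * margin u v c + margin u v c * margin u v a
    = - kK u v /\
  margin u v a * margin u v b * margin u v c = kS3 u v.
Proof.
  destruct cubic_roots_vieta as (H1 & H2 & H3).
  unfold margin, kK, kS3. cbn [pow] in *. repeat split; nsatz.
Qed.

Lemma cubic_roots_mem (x : R) : eq_cubic u v x = 0 -> x = a \/ x = b \/ x = c.
Proof.
  rewrite hroots. intro H. pose proof uv2_pos.
  apply Rmult_integral in H as [H | H]; [| lra].
  apply Rmult_integral in H as [H | H]; [| lra].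
  apply Rmult_integral in H as [H | H]; lra.
Qed.

Hypothesis habc : a < b < c.

Lemma eq_cubic'_middle_pos : 0 < eq_cubic' u v b.
Proof.
  destruct eq_cubic'_at_roots as (_ & -> & _).
  assert (0 < u * v ^ 2 * ((b - a) * (c - b))) by (apply Rmult_lt_0_compat; [exact uv2_pos | nra]).
  nra.
Qed.

Lemma margin_middle_pos : 0 < margin u v b.
Proof.
  assert (Hb : eq_cubic u v b = 0) by (rewrite hroots; ring).
  pose proof (eq_cubic_root_bounds b Hb). pose proof eq_cubic'_middle_pos.
  rewrite margin_eq, Hb. nra.
Qed.

Lemma stable_pos_eq_sorted_iff (x y : R) :
  stable_pos_eq u v x y <-> y = v * x * (1 - x) /\ (x = a \/ x = c) /\ 0 < margin u v x.
Proof.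
  rewrite stable_pos_eq_iff.
  destruct eq_cubic'_at_roots as (Ha & _ & Hc).
  pose proof uv2_pos. pose proof eq_cubic'_middle_pos.
  split.
  - intros (Hy & Hx & Hd & Hm). refine (conj Hy (conj _ Hm)).
    destruct (cubic_roots_mem x Hx) as [-> | [-> | ->]]; [auto | lra | auto].
  - intros (Hy & [-> | ->] & Hm); (repeat split; [exact Hy | rewrite hroots; ring | | exact Hm]).
    + assert (0 < u * v ^ 2 * ((b - a) * (c - a))) by (apply Rmult_lt_0_compat; nra).
      rewrite Ha. nra.
    + assert (0 < u * v ^ 2 * ((c - a) * (c - b))) by (apply Rmult_lt_0_compat; nra).
      rewrite Hc. nra.
Qed.

Lemma two_stable_of_margins_pos :
  0 < margin u v a -> 0 < margin u v c -> two_stable_pos_eqs u v.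
Proof.
  intros Ha Hc. exists a, (v * a * (1 - a)), c, (v * c * (1 - c)).
  split; [| split; [| split]].
  - intro E. injection E. lra.
  - apply stable_pos_eq_sorted_iff. auto.
  - apply stable_pos_eq_sorted_iff. auto.
  - intros x y (-> & [-> | ->] & _)%stable_pos_eq_sorted_iff; auto.
Qed.

Lemma unique_stable_of_margins_opp :
  margin u v a * margin u v c < 0 -> unique_stable_pos_eq u v.
Proof.
  intros Hac. destruct (Rlt_or_le 0 (margin u v a)) as [Ha | Ha].
  - exists a, (v * a * (1 - a)). split.
    + apply stable_pos_eq_sorted_iff. auto.
    + intros x y (-> & [-> | ->] & Hm)%stable_pos_eq_sorted_iff; [reflexivity | nra].
  - exists c, (v * c * (1 - c)). split.
    + apply stable_pos_eq_sorted_iff. split; [reflexivity | split; [auto | nra]].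
    + intros x y (-> & [-> | ->] & Hm)%stable_pos_eq_sorted_iff; [lra | reflexivity].
Qed.

End ThreeRoots.

End KopelCubic.

(* With s = u v fixed, [- v * kK], [- v * kA2] and [- v * kS3] are quadratics in v, so each sign
   hypothesis becomes a sign condition on a discriminant, a polynomial in s alone. *)
Section Coefficients.

Variables u v : R.
Hypothesis hu : 0 < u.
Hypothesis hv : 0 < v.

Lemma uv_gt_1_of_kR1_pos : kR1 u v > 0 -> 1 < u * v.
Proof.
  unfold kR1. intro HR. apply Rnot_le_lt. intro Huv.
  assert (0 < u * v) by nra.
  assert (0 < u * v * (u + v)) by nra.
  nra.
Qed.

Lemma kK_nonneg_bounds :
  0 <= kK u v -> 3 < u * v /\ 0 <= (u * v) ^ 2 - 14 * (u * v) + 25.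
Proof.
  unfold kK. intro HK. set (s := u * v).
  assert (Hs : 3 < s).
  { assert (0 < s) by (unfold s; nra).
    assert (0 < s * (u + v)) by (apply Rmult_lt_0_compat; lra).
    assert (E : u ^ 2 * v ^ 2 - 4 * u ^ 2 * v - 4 * u * v ^ 2 + 22 * u * v - 75
                = s ^ 2 + 22 * s - 75 - 4 * (s * (u + v))) by (unfold s; ring).
    nra. }
  split; [exact Hs |].
  assert (Hdisc : 0 <= (- (s ^ 2 + 22 * s - 75)) ^ 2 - 4 * (4 * s) * (4 * s ^ 2)).
  { apply (quadratic_discr_nonneg _ _ _ v); [lra |].
    replace (4 * s * v ^ 2 + - (s ^ 2 + 22 * s - 75) * v + 4 * s ^ 2)
      with (- v * (u ^ 2 * v ^ 2 - 4 * u ^ 2 * v - 4 * u * v ^ 2 + 22 * u * v - 75))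
      by (unfold s; ring).
    nra. }
  replace ((- (s ^ 2 + 22 * s - 75)) ^ 2 - 4 * (4 * s) * (4 * s ^ 2))
    with ((s ^ 2 - 14 * s + 25) * (s ^ 2 - 6 * s + 225)) in Hdisc by ring.
  assert (0 < s ^ 2 - 6 * s + 225) by nra.
  nra.
Qed.

Lemma kA2_nonpos : 12 <= u * v < 15 -> kA2 u v <= 0.
Proof.
  unfold kA2. intros Hs. set (s := u * v) in Hs.
  apply Rnot_lt_le. intro HA.
  assert (Hdisc : 0 < (- (s ^ 2 + 21 * s - 60)) ^ 2 - 4 * (5 * s - 11) * (4 * s ^ 2)).
  { apply (quadratic_discr_pos _ _ _ v); [lra |].
    replace ((5 * s - 11) * v ^ 2 + - (s ^ 2 + 21 * s - 60) * v + 4 * s ^ 2)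
      with (- v * (u ^ 2 * v ^ 2 - 4 * u ^ 2 * v - 5 * u * v ^ 2 + 21 * u * v + 11 * v - 60))
      by (unfold s; ring).
    nra. }
  replace ((- (s ^ 2 + 21 * s - 60)) ^ 2 - 4 * (5 * s - 11) * (4 * s ^ 2))
    with (- ((15 - s) * (s - 12) * (s ^ 2 - 11 * s + 20))) in Hdisc by ring.
  assert (0 <= (15 - s) * (s - 12) * (s ^ 2 - 11 * s + 20)).
  { apply Rmult_le_pos; [apply Rmult_le_pos |]; nra. }
  lra.
Qed.

(* The multiplier [4 * (s ^ 2 - 14 * s + 25)] makes the discriminant in v of the combination
   equal to [- (s ^ 2 - 14 * s + 25) ^ 2 * E] with [E > 0] on this interval. *)
Lemma kS3_add_kA2_nonpos :
  59 / 5 < u * v < 12 ->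
  kS3 u v + 4 * ((u * v) ^ 2 - 14 * (u * v) + 25) * kA2 u v <= 0.
Proof.
  intros Hs. set (s := u * v) in *.
  set (A := 20 * s ^ 3 - 320 * s ^ 2 + 1104 * s - 1100).
  set (B := -4 * s ^ 4 - 29 * s ^ 3 + 1301 * s ^ 2 - 5375 * s + 5875).
  set (C := (4 * s ^ 2 - 12 * s) * s + 16 * (s ^ 2 - 14 * s + 25) * s ^ 2).
  set (E := -16 * s ^ 4 + 600 * s ^ 3 - 7777 * s ^ 2 + 39198 * s - 55225).
  assert (HA : 0 < A) by (unfold A; nra).
  assert (HE : 0 < E) by (unfold E; assert (0 <= (s - 59 / 5) * (12 - s)) by nra; nra).
  apply Rnot_lt_le. intro HS.
  assert (Hdisc : 0 < B ^ 2 - 4 * A * C).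
  { apply (quadratic_discr_pos _ _ _ v); [exact HA |].
    replace (A * v ^ 2 + B * v + C)
      with (- v * (kS3 u v + 4 * (s ^ 2 - 14 * s + 25) * kA2 u v))
      by (unfold A, B, C, s, kS3, kA2; ring).
    nra. }
  replace (B ^ 2 - 4 * A * C) with (- (s ^ 2 - 14 * s + 25) ^ 2 * E) in Hdisc
    by (unfold A, B, C, E; ring).
  pose proof (pow2_ge_0 (s ^ 2 - 14 * s + 25)). nra.
Qed.

Lemma kK_neg : kS3 u v > 0 -> kA1 u v < 0 -> kA2 u v > 0 -> kK u v < 0.
Proof.
  unfold kA1. intros HS HA1 HA2. apply Rnot_le_lt. intro HK.
  destruct (kK_nonneg_bounds HK) as [Hs3 Hpsi].
  destruct (Rle_or_lt 12 (u * v)) as [Hs | Hs].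
  - assert (Hs' : 12 <= u * v < 15) by lra.
    pose proof (kA2_nonpos Hs'). lra.
  - assert (Hs' : 59 / 5 < u * v < 12) by nra.
    pose proof (kS3_add_kA2_nonpos Hs'). nra.
Qed.

End Coefficients.

Lemma esym_pos_all_pos (p q r : R) :
  p + q + r > 0 -> p * q + q * r + r * p > 0 -> p * q * r > 0 -> 0 < p /\ 0 < q /\ 0 < r.
Proof.
  assert (Hp : forall p q r, p + q + r > 0 -> p * q + q * r + r * p > 0 -> p * q * r > 0 -> 0 < p).
  { (* p' is a root of X^3 - e1 X^2 + e2 X - e3, which has no root X <= 0. *)
    intros p' q' r' H1 H2 H3. apply Rnot_le_lt. intro Hp.
    assert (0 <= (- p') ^ 3) by (apply pow_le; lra).
    assert (0 <= (p' + q' + r') * p' ^ 2) by (apply Rmult_le_pos; [lra | apply pow2_ge_0]).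
    assert (0 <= (p' * q' + q' * r' + r' * p') * (- p')) by (apply Rmult_le_pos; lra).
    assert ((- p') ^ 3 + (p' + q' + r') * p' ^ 2 + (p' * q' + q' * r' + r' * p') * (- p')
            + p' * q' * r' = 0) by ring.
    lra. }
  intros H1 H2 H3. split; [| split]; [apply (Hp p q r) | apply (Hp q r p) | apply (Hp r p q)]; lra.
Qed.

Theorem theorem2 (u v : R) (hu : 0 < u) (hv : 0 < v) :
  (kR1 u v > 0 -> kS3 u v > 0 -> kA1 u v < 0 -> kA2 u v > 0 ->
     exists x1 y1 x2 y2 : R,
       (x1, y1) <> (x2, y2) /\
       stable_pos_eq u v x1 y1 /\ stable_pos_eq u v x2 y2 /\
       (forall x y : R, stable_pos_eq u v x y -> (x, y) = (x1, y1) \/ (x, y) = (x2, y2)))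
  /\
  ((u * v > 1 /\ kR1 u v < 0 /\ kS3 u v > 0) \/ (u * v > 1 /\ kR1 u v > 0 /\ kS3 u v < 0) ->
     exists x0 y0 : R,
       stable_pos_eq u v x0 y0 /\
       (forall x y : R, stable_pos_eq u v x y -> (x, y) = (x0, y0))).
Proof.
  split.
  - intros HR HS HA1 HA2.
    pose proof (uv_gt_1_of_kR1_pos u v hu hv HR) as huv.
    destruct (cubic_roots_of_pos_discr u v hu hv huv HR) as (a & b & c & habc & hroots).
    destruct (margin_esym u v hu hv a b c hroots) as (E1 & E2 & E3).
    pose proof (kK_neg u v hu hv HS HA1 HA2). unfold kA1 in HA1.
    destruct (esym_pos_all_pos (margin u v a) (margin u v b) (margin u v c)) as (Ha & _ & Hc);
      [lra | lra | lra |].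
    exact (two_stable_of_margins_pos u v hu hv huv a b c hroots habc Ha Hc).
  - intros [(huv & HR & HS) | (huv & HR & HS)].
    + exact (unique_stable_of_neg_discr u v hu hv huv HR HS).
    + destruct (cubic_roots_of_pos_discr u v hu hv huv HR) as (a & b & c & habc & hroots).
      destruct (margin_esym u v hu hv a b c hroots) as (_ & _ & E3).
      pose proof (margin_middle_pos u v hu hv huv a b c hroots habc).
      apply (unique_stable_of_margins_opp u v hu hv huv a b c hroots habc).
      nra.
Qed.
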